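(* Let $(L,[-,-,-],\varepsilon)$ be a ternary Leibniz color algebra and $P:L\to L$ an even linear map such that for all $x,y,z\in\mathcal{H}(L)$, $$[P(x),P(y),P(z)]=P\big([P(x),P(y),z]+[P(x),y,P(z)]+[x,P(y),P(z)]-[P(x),P(y),P(z)]\big).$$ Then $L$ is a ternary Leibniz color algebra with the bracket $\{x,y,z\}=[P(x),P(y),z]+[P(x),y,P(z)]+[x,P(y),P(z)]-[P(x),P(y),P(z)]$.
   Context: $G$ is an abelian group, $\mathbb{K}$ a field of characteristic $\neq 2$, $\mathcal{H}(V)$ the homogeneous elements of a $G$-graded space $V$; even maps preserve degree. A skew-symmetric bicharacter $\varepsilon:G\times G\to\mathbb{K}^*$ satisfies $\varepsilon(a,b)\varepsilon(b,a)=1$, $\varepsilon(a,b+c)=\varepsilon(a,b)\varepsilon(a,c)$, $\varepsilon(a+b,c)=\varepsilon(a,c)\varepsilon(b,c)$; $\varepsilon(x,y)$ means $\varepsilon$ of the degrees. A ternary Leibniz color algebra is a $G$-graded space with such $\varepsilon$ and an even trilinear $[-,-,-]$ satisfying $[[x,y,z],t,u]=[x,y,[z,t,u]]+\varepsilon(z,t+u)[x,[y,t,u],z]+\varepsilon(y+z,t+u)[[x,t,u],y,z]$ for all homogeneous $x,y,z,t,u$. *)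

From HB Require Import structures.
From mathcomp Require Import all_boot all_order all_algebra.
Set Implicit Arguments. Unset Strict Implicit. Unset Printing Implicit Defensive.
Import GRing.Theory.
Local Open Scope ring_scope.

Definition graded (K : fieldType) (G : zmodType) (L : lmodType K)
    (V : G -> {pred L}) : Prop :=
  [/\ (forall g, (0 : L) \in V g),
      (forall g (a : K) (u v : L), u \in V g -> v \in V g -> a *: u + v \in V g),
      (forall x : L, exists (s : seq G) (f : G -> L),
          (forall g, f g \in V g) /\ x = \sum_(g <- s) f g) &
      (forall (s : seq G) (f : G -> L), uniq s -> (forall g, f g \in V g) ->
          \sum_(g <- s) f g = 0 -> forall g, g \in s -> f g = 0)].

Definition skew_bicharacter (K : fieldType) (G : zmodType) (eps : G -> G -> K) : Prop :=
  [/\ (forall a b, eps a b != 0),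
      (forall a b, eps a b * eps b a = 1),
      (forall a b c, eps a (b + c) = eps a b * eps a c) &
      (forall a b c, eps (a + b) c = eps a c * eps b c)].

Definition trilinear (K : fieldType) (L : lmodType K) (br : L -> L -> L -> L) : Prop :=
  [/\ (forall y z (k : K) x1 x2, br (k *: x1 + x2) y z = k *: br x1 y z + br x2 y z),
      (forall x z (k : K) y1 y2, br x (k *: y1 + y2) z = k *: br x y1 z + br x y2 z) &
      (forall x y (k : K) z1 z2, br x y (k *: z1 + z2) = k *: br x y z1 + br x y z2)].

Definition even_trilinear (K : fieldType) (G : zmodType) (L : lmodType K)
    (V : G -> {pred L}) (br : L -> L -> L -> L) : Prop :=
  forall a b c x y z, x \in V a -> y \in V b -> z \in V c -> br x y z \in V (a + b + c).

Definition even_map (K : fieldType) (G : zmodType) (L : lmodType K)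
    (V : G -> {pred L}) (P : L -> L) : Prop :=
  forall a x, x \in V a -> P x \in V a.

Definition linear_map (K : fieldType) (L : lmodType K) (P : L -> L) : Prop :=
  forall (k : K) x y, P (k *: x + y) = k *: P x + P y.

Definition ternary_leibniz_color_algebra (K : fieldType) (G : zmodType)
    (L : lmodType K) (V : G -> {pred L}) (eps : G -> G -> K)
    (br : L -> L -> L -> L) : Prop :=
  [/\ graded V, skew_bicharacter eps, trilinear br, even_trilinear V br &
      forall (a b c d e : G) (x y z t u : L),
        x \in V a -> y \in V b -> z \in V c -> t \in V d -> u \in V e ->
        br (br x y z) t u =
          br x y (br z t u)
          + eps c (d + e) *: br x (br y t u) z
          + eps (b + c) (d + e) *: br (br x t u) y z].

Definition P_bracket (K : fieldType) (L : lmodType K)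
    (br : L -> L -> L -> L) (P : L -> L) (x y z : L) : L :=
  br (P x) (P y) z + br (P x) y (P z) + br x (P y) (P z) - br (P x) (P y) (P z).

From HB Require Import structures.
From mathcomp Require Import all_boot all_order all_algebra.
Import GRing.Theory.
Set Implicit Arguments. Unset Strict Implicit.
Local Open Scope ring_scope.

(* Write {x,y,z} for the new bracket. Since P{x,y,z} = [Px,Py,Pz] on homogeneous
   elements, each of the four terms of the Leibniz identity for {-,-,-} expands,
   by trilinearity of [-,-,-], into the same pattern: the sum of the five ways of
   applying P to all but one of x,y,z,t,u, minus twice the term with P applied to
   all five, of the corresponding term of the Leibniz identity for [-,-,-].
   As P is even, all arguments stay homogeneous, so that identity applies termwise. *)

Section LinearMaps.
Variables (K : fieldType) (L : lmodType K).
Implicit Types (f g : L -> L).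

Lemma linear_map0 f : linear_map f -> f 0 = 0.
Proof.
move=> lin_f; have := lin_f 1 0 0; rewrite !scale1r addr0 => f0_twice.
by apply: (@addrI _ (f 0)); rewrite -f0_twice addr0.
Qed.

Lemma linear_mapD f a b : linear_map f -> f (a + b) = f a + f b.
Proof. by move=> lin_f; rewrite -[a]scale1r lin_f !scale1r. Qed.

Lemma linear_mapB f a b : linear_map f -> f (a - b) = f a - f b.
Proof.
by move=> lin_f; rewrite linear_mapD // -scaleN1r -[_ *: b]addr0 lin_f
  linear_map0 // addr0 scaleN1r.
Qed.

Lemma linear_mapDf f g : linear_map f -> linear_map g -> linear_map (fun x => f x + g x).
Proof. by move=> lin_f lin_g k x y; rewrite lin_f lin_g scalerDr addrACA. Qed.

Lemma linear_mapBf f g : linear_map f -> linear_map g -> linear_map (fun x => f x - g x).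
Proof. by move=> lin_f lin_g k x y; rewrite lin_f lin_g scalerBr opprD addrACA. Qed.

Lemma linear_map_comp f g : linear_map f -> linear_map g -> linear_map (f \o g).
Proof. by move=> lin_f lin_g k x y; rewrite /= lin_g lin_f. Qed.

Variable br : L -> L -> L -> L.
Hypothesis br_tri : trilinear br.

Lemma trilinear_slots :
  [/\ forall y z, linear_map (fun x => br x y z),
      forall x z, linear_map (fun y => br x y z) &
      forall x y, linear_map (br x y)].
Proof. by case: br_tri. Qed.

Lemma trilinearD1 a b y z : br (a + b) y z = br a y z + br b y z.
Proof. by have [l1 _ _] := trilinear_slots; rewrite (linear_mapD _ _ (l1 _ _)). Qed.

Lemma trilinearB1 a b y z : br (a - b) y z = br a y z - br b y z.
Proof. by have [l1 _ _] := trilinear_slots; rewrite (linear_mapB _ _ (l1 _ _)). Qed.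

Lemma trilinearD2 x a b z : br x (a + b) z = br x a z + br x b z.
Proof. by have [_ l2 _] := trilinear_slots; rewrite (linear_mapD _ _ (l2 _ _)). Qed.

Lemma trilinearB2 x a b z : br x (a - b) z = br x a z - br x b z.
Proof. by have [_ l2 _] := trilinear_slots; rewrite (linear_mapB _ _ (l2 _ _)). Qed.

Lemma trilinearD3 x y a b : br x y (a + b) = br x y a + br x y b.
Proof. by have [_ _ l3] := trilinear_slots; rewrite (linear_mapD _ _ (l3 _ _)). Qed.

Lemma trilinearB3 x y a b : br x y (a - b) = br x y a - br x y b.
Proof. by have [_ _ l3] := trilinear_slots; rewrite (linear_mapB _ _ (l3 _ _)). Qed.

Lemma trilinear_P_bracket P : linear_map P -> trilinear (P_bracket br P).
Proof.
move=> lin_P; have [l1 l2 l3] := trilinear_slots.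
split=> [y z|x z|x y]; rewrite /P_bracket.
- apply: linear_mapBf (linear_map_comp (l1 _ _) lin_P).
  apply: linear_mapDf (l1 _ _).
  exact: linear_mapDf (linear_map_comp (l1 _ _) lin_P) (linear_map_comp (l1 _ _) lin_P).
- apply: linear_mapBf (linear_map_comp (l2 _ _) lin_P).
  apply: linear_mapDf (linear_map_comp (l2 _ _) lin_P).
  exact: linear_mapDf (linear_map_comp (l2 _ _) lin_P) (l2 _ _).
- apply: linear_mapBf (linear_map_comp (l3 _ _) lin_P).
  apply: linear_mapDf (linear_map_comp (l3 _ _) lin_P).
  exact: linear_mapDf (l3 _ _) (linear_map_comp (l3 _ _) lin_P).
Qed.

End LinearMaps.

Section Grading.
Variables (K : fieldType) (G : zmodType) (L : lmodType K) (V : G -> {pred L}).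
Hypothesis V_graded : graded V.

Lemma graded_add g u v : u \in V g -> v \in V g -> u + v \in V g.
Proof. by case: V_graded => _ closedV _ _ Vu Vv; rewrite -[u]scale1r closedV. Qed.

Lemma graded_sub g u v : u \in V g -> v \in V g -> u - v \in V g.
Proof.
case: V_graded => V0 closedV _ _ Vu Vv.
by rewrite graded_add // -[- v]addr0 -scaleN1r closedV.
Qed.

Lemma even_trilinear_P_bracket br P :
  even_trilinear V br -> even_map V P -> even_trilinear V (P_bracket br P).
Proof.
move=> even_br even_P a b c x y z Vx Vy Vz.
by rewrite /P_bracket !(graded_sub, graded_add) // even_br // even_P.
Qed.

End Grading.

Section ExpansionOfLeibniz.
Variables (K : fieldType) (L : lmodType K) (P : L -> L).

Definition P_expand5 (F : L -> L -> L -> L -> L -> L) x y z t u : L :=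
  F x (P y) (P z) (P t) (P u) + F (P x) y (P z) (P t) (P u)
  + F (P x) (P y) z (P t) (P u) + F (P x) (P y) (P z) t (P u)
  + F (P x) (P y) (P z) (P t) u - F (P x) (P y) (P z) (P t) (P u) *+ 2.

Lemma P_expand5D F1 F2 x y z t u :
  P_expand5 (fun x y z t u => F1 x y z t u + F2 x y z t u) x y z t u =
  P_expand5 F1 x y z t u + P_expand5 F2 x y z t u.
Proof.
by rewrite /P_expand5 mulrnDl opprD !addrA (ACl (1*3*5*7*9*11*2*4*6*8*10*12)).
Qed.

Lemma P_expand5Z (k : K) F x y z t u :
  k *: P_expand5 F x y z t u = P_expand5 (fun x y z t u => k *: F x y z t u) x y z t u.
Proof. by rewrite /P_expand5 scalerBr -scalerMnr !scalerDr. Qed.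

Variable br : L -> L -> L -> L.
Hypothesis br_tri : trilinear br.

Lemma P_bracket_xyz_t_u x y z t u :
  P (P_bracket br P x y z) = br (P x) (P y) (P z) ->
  P_bracket br P (P_bracket br P x y z) t u =
  P_expand5 (fun x y z t u => br (br x y z) t u) x y z t u.
Proof.
move=> P_xyz; rewrite /P_expand5 {1}/P_bracket P_xyz /P_bracket.
by rewrite !(trilinearB1 br_tri) !(trilinearD1 br_tri)
   opprD !addrA (ACl (5*4*3*2*1*6*7)).
Qed.

Lemma P_bracket_x_y_ztu x y z t u :
  P (P_bracket br P z t u) = br (P z) (P t) (P u) ->
  P_bracket br P x y (P_bracket br P z t u) =
  P_expand5 (fun x y z t u => br x y (br z t u)) x y z t u.
Proof.
move=> P_ztu; rewrite /P_expand5 {1}/P_bracket P_ztu /P_bracket.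
by rewrite !(trilinearB3 br_tri) !(trilinearD3 br_tri)
   opprD !addrA (ACl (6*5*3*2*1*4*7)).
Qed.

Lemma P_bracket_x_ytu_z x y z t u :
  P (P_bracket br P y t u) = br (P y) (P t) (P u) ->
  P_bracket br P x (P_bracket br P y t u) z =
  P_expand5 (fun x y z t u => br x (br y t u) z) x y z t u.
Proof.
move=> P_ytu; rewrite /P_expand5 {1}/P_bracket P_ytu /P_bracket.
by rewrite !(trilinearB2 br_tri) !(trilinearD2 br_tri)
   opprD !addrA (ACl (6*4*1*3*2*5*7)).
Qed.

Lemma P_bracket_xtu_y_z x y z t u :
  P (P_bracket br P x t u) = br (P x) (P t) (P u) ->
  P_bracket br P (P_bracket br P x t u) y z =
  P_expand5 (fun x y z t u => br (br x t u) y z) x y z t u.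
Proof.
move=> P_xtu; rewrite /P_expand5 {1}/P_bracket P_xtu /P_bracket.
by rewrite !(trilinearB1 br_tri) !(trilinearD1 br_tri)
   opprD !addrA (ACl (5*2*1*4*3*6*7)).
Qed.

End ExpansionOfLeibniz.

Lemma P_expand5_eq_homogeneous (K : fieldType) (G : zmodType) (L : lmodType K)
    (V : G -> {pred L}) (P : L -> L) (F1 F2 : L -> L -> L -> L -> L -> L)
    (a b c d e : G) (x y z t u : L) :
  even_map V P ->
  (forall x y z t u, x \in V a -> y \in V b -> z \in V c -> t \in V d -> u \in V e ->
     F1 x y z t u = F2 x y z t u) ->
  x \in V a -> y \in V b -> z \in V c -> t \in V d -> u \in V e ->
  P_expand5 P F1 x y z t u = P_expand5 P F2 x y z t u.
Proof. by move=> even_P F12 Vx Vy Vz Vt Vu; rewrite /P_expand5 !F12 ?even_P. Qed.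

Theorem mainTheorem13 (K : fieldType) (G : zmodType) (L : lmodType K)
    (V : G -> {pred L}) (eps : G -> G -> K) (br : L -> L -> L -> L)
    (P : L -> L) :
  (2%:R : K) != 0 ->
  ternary_leibniz_color_algebra V eps br ->
  even_map V P -> linear_map P ->
  (forall (a b c : G) (x y z : L), x \in V a -> y \in V b -> z \in V c ->
     br (P x) (P y) (P z) = P (P_bracket br P x y z)) ->
  ternary_leibniz_color_algebra V eps (P_bracket br P).
Proof.
move=> _ [V_graded eps_bichar br_tri br_even br_leibniz] even_P lin_P P_morph.
split=> //; first exact: trilinear_P_bracket.
  exact: even_trilinear_P_bracket.
move=> a b c d e x y z t u Vx Vy Vz Vt Vu.
rewrite P_bracket_xyz_t_u -?(P_morph a b c) //.
rewrite P_bracket_x_y_ztu -?(P_morph c d e) //.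
rewrite P_bracket_x_ytu_z -?(P_morph b d e) //.
rewrite P_bracket_xtu_y_z -?(P_morph a d e) //.
rewrite !P_expand5Z -!P_expand5D.
exact: (P_expand5_eq_homogeneous even_P (br_leibniz a b c d e)).
Qed.
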